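(* In the EnSolver setting described in the context (ensemble of $M$ base models, output domain of size $N_{\mathcal{S}}$, threshold $\tau$ with $M(1-\tau)$ a positive integer, and assumptions of independence and (A1)–(A3)), for inputs $x$ the out-of-distribution error bound satisfies $$\mathcal{E}(M, N_{\mathcal{S}}, \tau) > p\left( \exists s \ne s_x,\ n(x, s) \ge M(1-\tau) + 1 \,\middle|\, x \in \mathcal{X}^{\text{in}} \right).$$
   Context: Setting: $\mathcal{S}$ is a finite set of output strings with $N_{\mathcal{S}} = |\mathcal{S}| \ge 2$; inputs $x \in \mathcal{X}$ are drawn from a probability distribution $p$ on $\mathcal{X}$, each $x$ having a single correct output $s_x \in \mathcal{S}$. $\mathcal{X}$ is the disjoint union of the in-distribution set $\mathcal{X}^{\text{in}}$ and the out-of-distribution set $\mathcal{X}^{\text{out}}$, and $\alpha = p(x \in \mathcal{X}^{\text{in}})$. An ensemble consists of $M$ base models $m_1, \dots, m_M$, each of which produces a (random) prediction $m_i(x) \in \mathcal{S}$ on input $x$; probabilities are taken jointly over $x \sim p$ and the predictions, and the base models make their predictions independently of each other given the input (in particular conditionally on $x \in \mathcal{X}^{\text{in}}$ and conditionally on $x \in \mathcal{X}^{\text{out}}$). Let $\beta_i = p(m_i(x) = s_x \mid x \in \mathcal{X}^{\text{in}})$, $\beta_{\text{min}} = \min_i \beta_i$, $\beta_{\text{max}} = \max_i \beta_i$. Assumptions: (A1) $\beta_{\text{min}} > 1/N_{\mathcal{S}}$; (A2) for each $i$, conditionally on $x \in \mathcal{X}^{\text{in}}$, $m_i(x)$ equals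 each incorrect string $s \neq s_x$ with probability $(1-\beta_i)/(N_{\mathcal{S}}-1)$; (A3) for each $i$, conditionally on $x \in \mathcal{X}^{\text{out}}$, $m_i(x)$ equals each $s \in \mathcal{S}$ with probability $1/N_{\mathcal{S}}$. For $x$ and $s \in \mathcal{S}$, $n(x,s)$ is the number of base models with $m_i(x) = s$. The threshold $\tau \in (0,1]$ is such that $M(1-\tau)$ is a positive integer. The EnSolver $m$ acts as follows on input $x$: let $p_{\max} = \max_{s} n(x,s)/M$ and uncertainty $u = 1 - p_{\max}$; if $u < \tau$ it outputs a string $y$ maximizing $n(x,\cdot)$, otherwise it outputs a special skip symbol $s_{\text{skip}}$. The out-of-distribution error bound is $\mathcal{E}(M, N_{\mathcal{S}}, \tau) = \binom{M}{\lfloor M/2 \rfloor} (N_{\mathcal{S}})^{-M(1-\tau)}$. *)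

From HB Require Import structures.
From mathcomp Require Import all_boot all_order all_algebra.
From mathcomp Require Import all_classical all_reals all_analysis.
Set Implicit Arguments. Unset Strict Implicit. Unset Printing Implicit Defensive.
Import Order.TTheory GRing.Theory Num.Theory.
Local Open Scope classical_set_scope.
Local Open Scope ring_scope.

Section EnsDefs.
Context {d : measure_display} {T : measurableType d} {R : realType}.

Definition cprob (P : probability T R) (B A : set T) : R :=
  fine (P (A `&` B)) / fine (P B).

Definition nvotes (S : finType) (M : nat) (m : 'I_M -> T -> S) (w : T) (s : S) : nat :=
  #|[set i : 'I_M | m i w == s]|.

Definition cond_indep (P : probability T R) (B : set T)
    (S : finType) (M : nat) (m : 'I_M -> T -> S) : Prop :=
  forall (J : {set 'I_M}) (t : 'I_M -> S),
    cprob P B (\big[setI/setT]_(i in J) (m i @^-1` [set t i]))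
    = \prod_(i in J) cprob P B (m i @^-1` [set t i]).

End EnsDefs.

Definition Ebound {R : realType} (M N : nat) (tau : R) : R :=
  ('C(M, M./2))%:R * powR (N%:R) (- (M%:R * (1 - tau))).

From HB Require Import structures.
From mathcomp Require Import all_boot all_order all_algebra.
From mathcomp Require Import all_classical all_reals all_analysis.
From mathcomp Require Import ring lra zify.
Set Implicit Arguments.
Unset Strict Implicit.
Unset Printing Implicit Defensive.

Import Order.TTheory GRing.Theory Num.Theory.
Local Open Scope classical_set_scope.
Local Open Scope ring_scope.

(* Condition further on the value c of s_x.  Given x in X^in with s_x = c, a
   wrong string s <> c collects K + 1 votes, where K = M(1 - tau), only if some
   set J of K + 1 models all output s.  By conditional independence and (A2)
   this has probability prod_(i in J) (1 - beta_i)/(N - 1) <= N^-(K+1), the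
   last step being (A1).  A union bound over the N - 1 wrong strings and the
   C(M, K+1) <= C(M, M/2) sets J gives (N - 1) C(M, M/2) N^-(K+1), which is
   strictly below C(M, M/2) N^-K; averaging over c conditions on X^in alone. *)

Lemma leq_bin_succ n k : (k.*2 < n)%N -> ('C(n, k) <= 'C(n, k.+1))%N.
Proof.
move=> kn; rewrite -(leq_pmul2l (ltn0Sn k)) mul_bin_left.
by apply: leq_mul (leqnn _); lia.
Qed.

Lemma leq_bin_half n k : ('C(n, k) <= 'C(n, n./2))%N.
Proof.
have half_le : ((n./2).*2 <= n)%N by rewrite -{2}(odd_double_half n) leq_addl.
have climb i j : (j + i = n./2)%N -> ('C(n, j) <= 'C(n, n./2))%N.
  elim: i j => [|i IH] j hj; first by rewrite -hj addn0.
  have step : ('C(n, j) <= 'C(n, j.+1))%N by apply: leq_bin_succ; lia.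
  by apply: leq_trans step (IH j.+1 _); rewrite addSnnS.
have below j : (j <= n./2)%N -> ('C(n, j) <= 'C(n, n./2))%N.
  by move=> /subnKC; apply: climb.
case: (leqP k n./2) => [/below //|hk]; case: (leqP k n) => kn; last by rewrite bin_small.
rewrite -bin_sub //; apply: below.
have := odd_double_half n; lia.
Qed.

Lemma wrong_prob_le_uniform (F : realFieldType) (N b : F) :
  1 < N -> N^-1 <= b -> (1 - b) / (N - 1) <= N^-1.
Proof.
move=> N1 hb; rewrite ler_pdivrMr ?subr_gt0 // mulrBr mulr1 mulVf; first lra.
by rewrite gt_eqF //; lra.
Qed.

Lemma Ebound_nat (R : realType) M n (tau : R) K :
  K%:R = M%:R * (1 - tau) -> Ebound M n tau = 'C(M, M./2)%:R / n%:R ^+ K.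
Proof. by move=> hK; rewrite /Ebound -hK powR_invn. Qed.

Lemma wrong_votes_bound_lt (F : realFieldType) n M K : (1 < n)%N ->
  (n.-1 * 'C(M, K.+1))%:R * (n%:R^-1 : F) ^+ K.+1 < 'C(M, M./2)%:R / n%:R ^+ K.
Proof.
move=> n1; have n0 : (0 : F) < n%:R by rewrite ltr0n; lia.
have -> : (n.-1 * 'C(M, K.+1))%:R * (n%:R^-1 : F) ^+ K.+1
    = 'C(M, K.+1)%:R / n%:R ^+ K * (n.-1%:R / n%:R).
  by rewrite natrM exprVn exprS; field; rewrite expf_neq0 // gt_eqF.
apply: (le_lt_trans (y := 'C(M, M./2)%:R / n%:R ^+ K * (n.-1%:R / n%:R))).
  apply: ler_wpM2r; first by rewrite divr_ge0.
  by apply: ler_wpM2r; rewrite ?invr_ge0 ?exprn_ge0 ?ler_nat ?leq_bin_half // ltW.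
rewrite gtr_pMr; last by rewrite divr_gt0 ?exprn_gt0 // ltr0n bin_gt0; lia.
by rewrite ltr_pdivrMr // mul1r ltr_nat; lia.
Qed.

Section RealProbability.
Context {d : measure_display} {T : measurableType d} {R : realType}.
Variable P : probability T R.

Definition pr (A : set T) : R := fine (P A).

Lemma pr_ge0 A : 0 <= pr A.
Proof. exact/fine_ge0/measure_ge0. Qed.

Lemma pr_le A B : measurable A -> measurable B -> A `<=` B -> pr A <= pr B.
Proof.
move=> mA mB AB; apply: fine_le; rewrite ?fin_num_measure //.
by apply: le_measure; rewrite ?inE.
Qed.

Lemma pr_setU_le A B : measurable A -> measurable B -> pr (A `|` B) <= pr A + pr B.
Proof.
move=> mA mB; rewrite /pr -fineD ?fin_num_measure //.
apply: fine_le; rewrite ?fin_numD ?fin_num_measure //; first exact: measurableU.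
exact: measureU2.
Qed.

Lemma pr_setU A B : measurable A -> measurable B -> A `&` B = set0 ->
  pr (A `|` B) = pr A + pr B.
Proof. by move=> mA mB AB; rewrite /pr -fineD ?fin_num_measure // measureU. Qed.

Lemma pr_bigsetU_le (I : Type) (r : seq I) (Q : pred I) (F : I -> set T) :
  (forall i, measurable (F i)) ->
  pr (\big[setU/set0]_(i <- r | Q i) F i) <= \sum_(i <- r | Q i) pr (F i).
Proof.
move=> mF; elim: r => [|a r IH]; first by rewrite !big_nil /pr measure0.
rewrite !big_cons; case: ifP => // _.
have mU : measurable (\big[setU/set0]_(i <- r | Q i) F i).
  by apply: bigsetU_measurable => i _; exact: mF.
by apply: le_trans (pr_setU_le (mF a) mU) _; rewrite lerD2l.
Qed.

Lemma pr_bigsetU (I : eqType) (r : seq I) (F : I -> set T) :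
  uniq r -> (forall i, measurable (F i)) ->
  (forall i j, i != j -> F i `&` F j = set0) ->
  pr (\big[setU/set0]_(i <- r) F i) = \sum_(i <- r) pr (F i).
Proof.
move=> + mF dF; elim: r => [|a r IH]; first by rewrite !big_nil /pr measure0.
move=> /= /andP[ar ur]; rewrite !big_cons pr_setU ?IH //.
  exact: bigsetU_measurable.
rewrite big_distrr /= big_seq big1 // => i ir; apply: dF.
by apply: contraNneq ar => ->.
Qed.

Lemma pr_partition (I : finType) (f : T -> I) (A : set T) :
  (forall c, measurable (A `&` f @^-1` [set c])) ->
  pr A = \sum_c pr (A `&` f @^-1` [set c]).
Proof.
move=> mA; rewrite -pr_bigsetU ?index_enum_uniq //; last first.
  move=> c c' cc'; apply/seteqP; split => // w [[_ /= fc] [_ /= fc']].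
  by move: cc'; rewrite -fc -fc' eqxx.
congr pr; rewrite -bigcup_seq; apply/seteqP; split => [w Aw|w [c _ []] //].
by exists (f w); rewrite //= mem_index_enum.
Qed.

Lemma pr_setI_le_partition (I : finType) (f : T -> I) (A B : set T) (b : R) :
  (forall c, measurable (B `&` f @^-1` [set c])) ->
  (forall c, measurable (A `&` (B `&` f @^-1` [set c]))) ->
  (forall c, pr (A `&` (B `&` f @^-1` [set c])) <= b * pr (B `&` f @^-1` [set c])) ->
  pr (A `&` B) <= b * pr B.
Proof.
move=> mB mAB hb.
have mAB' c : measurable (A `&` B `&` f @^-1` [set c]) by rewrite -setIA.
rewrite (pr_partition mB) (pr_partition mAB') mulr_sumr.
by apply: ler_sum => c _; rewrite -setIA.
Qed.

Lemma cprobE B A : cprob P B A = pr (A `&` B) / pr B.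
Proof. by []. Qed.

Lemma cprob_ge0 B A : 0 <= cprob P B A.
Proof. exact: divr_ge0 (pr_ge0 _) (pr_ge0 _). Qed.

Lemma cprob_bigsetU_le (I : Type) (r : seq I) (Q : pred I) (F : I -> set T) B :
  measurable B -> (forall i, measurable (F i)) ->
  cprob P B (\big[setU/set0]_(i <- r | Q i) F i) <= \sum_(i <- r | Q i) cprob P B (F i).
Proof.
move=> mB mF; rewrite cprobE big_distrl /= -mulr_suml ler_wpM2r ?invr_ge0 ?pr_ge0 //.
by apply: pr_bigsetU_le => i; exact: measurableI.
Qed.

Lemma pr_setI_le_cprob A B b : measurable A -> measurable B ->
  ((0 < P B)%E -> cprob P B A <= b) -> pr (A `&` B) <= b * pr B.
Proof.
move=> mA mB hb; have [|PBpos] := leP (P B) 0%E.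
  rewrite measure_le0 => /eqP PB0.
  have : pr (A `&` B) <= pr B by apply: pr_le (measurableI _ _ mA mB) mB _; exact: subIsetr.
  by rewrite /pr PB0 mulr0.
have prB : 0 < pr B by apply: fine_gt0; rewrite PBpos ltey_eq fin_num_measure.
by rewrite -ler_pdivrMr // -cprobE hb.
Qed.
End RealProbability.

Section Votes.
Context {d : measure_display} {T : measurableType d} {R : realType}.
Variables (P : probability T R) (S : finType) (M : nat) (m : 'I_M -> T -> S).
Hypothesis mm : forall i s, measurable (m i @^-1` [set s]).

Definition unanimous (s : S) (J : {set 'I_M}) : set T :=
  \big[setI/setT]_(i in J) m i @^-1` [set s].

Lemma unanimousP s J w : unanimous s J w <-> forall i, i \in J -> m i w = s.
Proof.
rewrite /unanimous -bigcap_seq_cond; split => [h i iJ|h i /andP[_ /h //]].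
by apply: h; rewrite /= mem_index_enum.
Qed.

Lemma measurable_unanimous s J : measurable (unanimous s J).
Proof. by apply: bigsetI_measurable => i _; exact: mm. Qed.

Lemma nvotes_geP k w s :
  (k <= nvotes m w s)%N <-> exists2 J : {set 'I_M}, #|J| == k & unanimous s J w.
Proof.
split => [/card_geqP [l [ul <- sub]] | [J /eqP <- /unanimousP hJ]].
  exists [set i in l]; first by rewrite cardsE (card_uniqP ul).
  by apply/unanimousP => i; rewrite inE => /sub; rewrite inE => /eqP.
by apply: subset_leq_card; apply/fintype.subsetP => i /hJ mi; apply/mem_set/eqP.
Qed.

Definition wrong_votes_ge (c : S) (k : nat) : set T :=
  [set w | exists2 s, s != c & (k <= nvotes m w s)%N].

Lemma wrong_votes_geE c k : wrong_votes_ge c k =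
  \big[setU/set0]_(s in [set~ c]%SET)
    \big[setU/set0]_(J in [set J : {set 'I_M} | #|J| == k]%SET) unanimous s J.
Proof.
rewrite -bigcup_pred; apply/seteqP; split => [w [s sc]|w [s]].
  move=> /nvotes_geP [J cJ hJ]; exists s; first by rewrite /= in_setC1.
  by rewrite -bigcup_pred; exists J; rewrite //= finset.inE.
rewrite /= in_setC1 -bigcup_pred => sc [J]; rewrite /= finset.inE => cJ hJ.
by exists s => //; apply/nvotes_geP; exists J.
Qed.

Lemma measurable_wrong_votes_ge c k : measurable (wrong_votes_ge c k).
Proof.
rewrite wrong_votes_geE; apply: bigsetU_measurable => s _.
by apply: bigsetU_measurable => J _; exact: measurable_unanimous.
Qed.

Lemma cprob_unanimous_le B s J q : cond_indep P B m ->
  (forall i, cprob P B (m i @^-1` [set s]) <= q) ->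
  cprob P B (unanimous s J) <= q ^+ #|J|.
Proof.
move=> hind hq; rewrite [cprob _ _ _](hind J (fun=> s)) -prodr_const.
by apply: ler_prod => i _; rewrite cprob_ge0 hq.
Qed.

Lemma cprob_wrong_votes_ge_le B c k q : measurable B -> cond_indep P B m ->
  (forall i s, s != c -> cprob P B (m i @^-1` [set s]) <= q) ->
  cprob P B (wrong_votes_ge c k) <= (#|S|.-1 * 'C(M, k))%:R * q ^+ k.
Proof.
move=> mB hind hq.
have mU s : measurable (\big[setU/set0]_(J in [set J : {set 'I_M} | #|J| == k]%SET)
                          unanimous s J).
  by apply: bigsetU_measurable => J _; exact: measurable_unanimous.
rewrite wrong_votes_geE natrM -mulrA -(cardsC1 c) mulr_natl -sumr_const.
apply: le_trans (cprob_bigsetU_le P _ _ mB mU) _; apply: ler_sum => s; rewrite in_setC1 => sc.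
rewrite -[M in 'C(M, k)]card_ord -card_draws mulr_natl -sumr_const.
apply: le_trans (cprob_bigsetU_le P _ _ mB (measurable_unanimous s)) _.
apply: ler_sum => J; rewrite finset.inE => /eqP <-.
by apply: cprob_unanimous_le => // i; exact: hq.
Qed.

End Votes.

Theorem lemma2
  (d : measure_display) (T : measurableType d) (R : realType)
  (P : probability T R)
  (S : finType) (M : nat) (tau : R)
  (In : set T)                 (* the event x \in X^in *)
  (sx : T -> S)                (* the correct output s_x *)
  (m : 'I_M -> T -> S)         (* the predictions m_i(x) *)
  (beta : 'I_M -> R)
  (hN : (2 <= #|S|)%N)
  (hIn : measurable In)
  (hInpos : (0 < P In)%E)
  (hsx : forall s, measurable (sx @^-1` [set s]))
  (hm : forall i s, measurable (m i @^-1` [set s]))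
  (htau : 0 < tau <= 1)
  (hK : exists K : nat, (0 < K)%N /\ K%:R = M%:R * (1 - tau))
  (hbeta : forall i, beta i = cprob P In [set w | m i w = sx w])
  (* (A1) *)
  (hA1 : forall i, (#|S|%:R)^-1 < beta i)
  (* independence + (A2): conditionally on x \in X^in (and on the value c of s_x),
     the predictions are independent, correct w.p. beta_i, and equal to each
     incorrect string w.p. (1 - beta_i)/(N_S - 1) *)
  (hind : forall c : S, (0 < P (In `&` sx @^-1` [set c]))%E ->
     cond_indep P (In `&` sx @^-1` [set c]) m)
  (hA2 : forall (c : S) i (s : S), (0 < P (In `&` sx @^-1` [set c]))%E ->
     cprob P (In `&` sx @^-1` [set c]) (m i @^-1` [set s])
     = if s == c then beta i else (1 - beta i) / (#|S|%:R - 1))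
  (* independence + (A3) on x \in X^out *)
  (hindout : (0 < P (~` In))%E -> cond_indep P (~` In) m)
  (hA3 : forall i (s : S), (0 < P (~` In))%E ->
     cprob P (~` In) (m i @^-1` [set s]) = (#|S|%:R)^-1) :
  cprob P In [set w | exists s : S, s <> sx w /\
                       M%:R * (1 - tau) + 1 <= (nvotes m w s)%:R]
  < Ebound M #|S| tau.
Proof.
have [K [_ hKe]] := hK.
have N1 : 1 < #|S|%:R :> R by rewrite ltr1n.
have thresh n : (M%:R * (1 - tau) + 1 <= n%:R :> R) = (K.+1 <= n)%N.
  by rewrite -hKe natr1 ler_nat.
set E := [set w | _].
pose In_ c := In `&` sx @^-1` [set c].
have mIn_ c : measurable (In_ c) by exact: measurableI.
have E_In c : E `&` In_ c = wrong_votes_ge m c K.+1 `&` In_ c.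
  apply/seteqP; split => w [hw [Iw /= wc]]; split => //; move: hw; rewrite -wc /=.
    by move=> [s [sw hs]]; exists s; [exact/eqP | rewrite -thresh].
  by move=> [s sw hs]; exists s; split; [exact/eqP | rewrite thresh].
have class_bound c : pr P (E `&` In_ c)
    <= (#|S|.-1 * 'C(M, K.+1))%:R * (#|S|%:R^-1) ^+ K.+1 * pr P (In_ c).
  rewrite E_In; apply: pr_setI_le_cprob (measurable_wrong_votes_ge hm c K.+1) (mIn_ c) _.
  move=> hpos; apply: (cprob_wrong_votes_ge_le hm K.+1 (mIn_ c) (hind c hpos)) => i s sc.
  by rewrite /In_ hA2 // (negbTE sc) wrong_prob_le_uniform // ltW.
have prIn : 0 < pr P In by apply: fine_gt0; rewrite hInpos ltey_eq fin_num_measure.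
rewrite (Ebound_nat _ hKe); apply: le_lt_trans (wrong_votes_bound_lt _ _ _ hN).
rewrite cprobE ler_pdivrMr //; apply: (pr_setI_le_partition mIn_ _ class_bound) => c.
by rewrite E_In; exact: measurableI (measurable_wrong_votes_ge hm c K.+1) (mIn_ c).
Qed.
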